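(* Suppose there is $s\in\{-1,1\}$ with $s\rho_i\ge0$ for all $i$, and the $\rho_i$ are not all zero. Then $u_n>0$ entrywise and $s\,v_n<0$ entrywise (i.e. $v_n$ has constant sign $-s$). Consequently the vector $\bar z_n^S=u_n\vartheta_n^\star+v_n$ either is identically zero or has at least one strictly positive and at least one strictly negative component.
   Context: Fix $n\ge1$, $\sigma>0$, and for each $i$: $c_i>0$, $\gamma_i>0$, $\nu_i>0$, $\rho_i\in(-1,1)$. Define $p_{i,j}=\frac{1}{\gamma_i\nu_j^2}$ for $j\ne i$ and $p_{i,i}=\frac{1}{\gamma_i\nu_i^2+1/c_i}$; for each $j$: $\Theta_{j,n}=\sum_{i=1}^np_{i,j}$, $\zeta_j=p_{j,j}/c_j$, $a_j=\rho_j\zeta_j/\nu_j$, $w_{j,n}=\frac{1}{n\Theta_{j,n}}$; for each $k$: $M_{k,j}=\rho_j\nu_jp_{k,j}$, $\upsilon_{k,n}=\sum_{j=1}^n\rho_j^2\nu_j^2p_{k,j}$, $\varphi_{k,n}=1-\frac{\gamma_k}{n}\upsilon_{k,n}$. Define the $n\times n$ matrix $L_n$ by $(L_n)_{k,j}=\frac{\rho_j^2\zeta_jp_{k,j}}{n\varphi_{k,n}\Theta_{j,n}}$ and vectors $V_n,U_n$ by $(V_n)_k=\frac{n}{\gamma_k\sigma^2\varphi_{k,n}}$, $(U_n)_k=-\frac{1}{\varphi_{k,n}}\Big(\frac{1}{\sigma\sqrt n}\sum_{j=1}^n\frac{1-\zeta_j}{\Theta_{j,n}}M_{k,j}+\frac{1}{\sigma\sqrt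 n}\frac{\rho_k\nu_k}{c_k}p_{k,k}\Big)$. It is known that $\mathrm I_n-L_n$ is invertible with entrywise nonnegative inverse. Set $u_n=(\mathrm I_n-L_n)^{-1}V_n$, $v_n=(\mathrm I_n-L_n)^{-1}U_n$, $\vartheta_n^\star=-\frac{\mathbf 1_n^\top v_n}{\mathbf 1_n^\top u_n}$. (The vector $u_n\vartheta_n^\star+v_n$ is the $z^S$-part of the maximiser of $g(z^Q,z^S)=-\frac1n\sum_i\big(\frac{(z^{Q,i,i})^2}{2c_i}+\frac{\gamma_i}{2}\sum_j\nu_j^2(z^{Q,i,j})^2+\frac{\gamma_i\sigma^2}{2}(z^{S,i})^2+\frac{\gamma_i\sigma}{\sqrt n}z^{S,i}\sum_j\rho_j\nu_jz^{Q,i,j}\big)+\frac1n\sum_i\frac{z^{Q,i,i}}{c_i}$ subject to $\sum_iz^{Q,i,j}=1$ for all $j$ and $\sum_kz^{S,k}=0$.) *)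

From mathcomp Require Import all_boot all_order all_algebra.
Set Implicit Arguments. Unset Strict Implicit. Unset Printing Implicit Defensive.
Import Order.TTheory GRing.Theory Num.Theory.
Local Open Scope ring_scope.

Section Model.
Variables (R : rcfType) (n : nat) (sigma : R).
Variables (c gamma nu rho : 'I_n -> R).

Definition pp (i j : 'I_n) : R :=
  if i == j then 1 / (gamma i * nu i ^+ 2 + 1 / c i)
  else 1 / (gamma i * nu j ^+ 2).
Definition Theta (j : 'I_n) : R := \sum_(i < n) pp i j.
Definition zeta (j : 'I_n) : R := pp j j / c j.
Definition MM (k j : 'I_n) : R := rho j * nu j * pp k j.
Definition upsilon (k : 'I_n) : R := \sum_(j < n) rho j ^+ 2 * nu j ^+ 2 * pp k j.
Definition varphi (k : 'I_n) : R := 1 - gamma k / n%:R * upsilon k.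

Definition Lmx : 'M[R]_n :=
  \matrix_(k < n, j < n)
    (rho j ^+ 2 * zeta j * pp k j / (n%:R * varphi k * Theta j)).
Definition Vvec : 'cV[R]_n :=
  \col_(k < n) (n%:R / (gamma k * sigma ^+ 2 * varphi k)).
Definition Uvec : 'cV[R]_n :=
  \col_(k < n) (- (1 / varphi k) *
     (1 / (sigma * Num.sqrt n%:R) *
        \sum_(j < n) ((1 - zeta j) / Theta j * MM k j)
      + 1 / (sigma * Num.sqrt n%:R) * (rho k * nu k / c k * pp k k))).

Definition uvec : 'cV[R]_n := invmx (1%:M - Lmx) *m Vvec.
Definition vvec : 'cV[R]_n := invmx (1%:M - Lmx) *m Uvec.
Definition thetastar : R :=
  - (\sum_(k < n) vvec k 0) / (\sum_(k < n) uvec k 0).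
Definition zbar : 'cV[R]_n := thetastar *: uvec + vvec.
End Model.

(* [I - L] is an M-matrix: [L] is entrywise nonnegative, and the weights
   [varphi] satisfy [varphi^T L = varphi^T - d 1^T] with
   [d = 1 - (sum_i rho_i^2)/n > 0], so a weighted minimum principle shows that
   [(I - L)^-1] maps positive vectors to positive vectors.  [V] is positive
   and [s U] is negative (the sign of [U] is that of the [rho_j]), which gives
   the signs of [u] and [v].  Finally [thetastar] is chosen so that the entries
   of [zbar] sum to zero, and a zero-sum vector is either zero or has entries
   of both signs. *)
From mathcomp Require Import all_boot all_order all_algebra.
From mathcomp Require Import ring lra.
Set Implicit Arguments. Unset Strict Implicit. Unset Printing Implicit Defensive.
Import Order.TTheory GRing.Theory Num.Theory.
Local Open Scope ring_scope.

Section WeightedSubstochastic.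
Variables (R : realFieldType) (n : nat) (L : 'M[R]_n) (w : 'I_n -> R) (d : R).
Hypotheses (L_ge0 : forall i j, 0 <= L i j) (w_gt0 : forall i, 0 < w i)
  (d_gt0 : 0 < d) (wL : forall j, \sum_k w k * L k j = w j - d).

Lemma mulmx_1subL_entry (x : 'cV[R]_n) k :
  ((1%:M - L) *m x) k 0 = x k 0 - \sum_j L k j * x j 0.
Proof. by rewrite mulmxBl mul1mx !mxE. Qed.

(* Apply [w^T] to [(I - L) m >= 0] for the negative part [m] of [x]: the
   defect [d] forces [sum_j m_j >= 0], hence [m = 0]. *)
Lemma minimum_principle (x : 'cV[R]_n) :
  (forall k, 0 <= ((1%:M - L) *m x) k 0) -> forall k, 0 <= x k 0.
Proof.
move=> Lx_ge0.
pose m j := Num.min (x j 0) 0.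
have m_le0 j : m j <= 0 by rewrite /m ge_min lexx orbT.
have Lm_le k : \sum_j L k j * m j <= m k.
  rewrite /m le_min; apply/andP; split.
    apply: (le_trans (y := \sum_j L k j * x j 0)).
      by apply: ler_sum => j _; apply: ler_wpM2l => //; rewrite ge_min lexx.
    by have := Lx_ge0 k; rewrite mulmx_1subL_entry subr_ge0.
  by apply: sumr_le0 => j _; exact: mulr_ge0_le0 (L_ge0 _ _) (m_le0 _).
have wLm : \sum_k w k * (\sum_j L k j * m j) = \sum_k w k * m k - d * \sum_j m j.
  under eq_bigr => k _ do rewrite mulr_sumr.
  rewrite exchange_big /=.
  under eq_bigr => j _ do
    (under eq_bigr => k _ do rewrite mulrA; rewrite -mulr_suml wL mulrBl).
  by rewrite sumrB mulr_sumr; congr (_ - _); apply: eq_bigr => j _; rewrite mulrC.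
have sum_m_ge0 : 0 <= \sum_j m j.
  have : \sum_k w k * (\sum_j L k j * m j) <= \sum_k w k * m k.
    by apply: ler_sum => k _; apply: ler_wpM2l => //; exact: ltW.
  rewrite wLm => h; have : 0 <= d * \sum_j m j by lra.
  by rewrite pmulr_rge0.
move=> k; rewrite leNgt; apply/negP => xk_lt0.
have mk : m k = x k 0 by apply/min_idPl; exact: ltW.
have : \sum_j m j <= m k.
  by rewrite (bigD1 k) //= ler_wnDr //; apply: sumr_le0 => j _.
lra.
Qed.

Lemma unitmx_1subL : (1%:M - L) \in unitmx.
Proof.
rewrite unitmxE unitfE -det_tr; apply/negP => /det0P [v v_neq0 vL].
have Lv0 : (1%:M - L) *m v^T = 0.
  by rewrite -[_ *m _]trmxK trmx_mul trmxK vL trmx0.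
have v_ge0 k : 0 <= (v^T) k 0.
  by apply: minimum_principle => i; rewrite Lv0 mxE.
have v_le0 k : 0 <= (- v^T) k 0.
  by apply: minimum_principle => i; rewrite mulmxN Lv0 oppr0 mxE.
move/negP: v_neq0; apply; apply/eqP/matrixP => i j.
by have := v_ge0 j; have := v_le0 j; rewrite (ord1 i) !mxE; lra.
Qed.

Lemma invmx_1subL_gt0 (b : 'cV[R]_n) : (forall k, 0 < b k 0) ->
  forall k, 0 < (invmx (1%:M - L) *m b) k 0.
Proof.
move=> b_gt0 k; set x := invmx _ *m b.
have Lx : (1%:M - L) *m x = b by rewrite mulmxA mulmxV ?mul1mx ?unitmx_1subL.
have x_ge0 : forall k, 0 <= x k 0.
  by apply: minimum_principle => i; rewrite Lx ltW.
have : 0 <= \sum_j L k j * x j 0 by apply: sumr_ge0 => j _; exact: mulr_ge0.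
by have := b_gt0 k; rewrite -Lx mulmx_1subL_entry; lra.
Qed.

End WeightedSubstochastic.

Lemma sum_cV_gt0 (R : numDomainType) n (x : 'cV[R]_n) :
  (0 < n)%N -> (forall k, 0 < x k 0) -> 0 < \sum_k x k 0.
Proof.
move=> n_gt0 x_gt0; rewrite (bigD1 (Ordinal n_gt0)) //= ltr_pwDl //.
by apply: sumr_ge0 => k _; exact: ltW.
Qed.

Lemma sum_cV_balanced (R : fieldType) n (u v : 'cV[R]_n) :
  \sum_k u k 0 != 0 ->
  \sum_k ((- (\sum_k v k 0) / (\sum_k u k 0)) *: u + v) k 0 = 0.
Proof.
move=> su_neq0; under eq_bigr => k _ do rewrite 2!mxE.
by rewrite big_split /= -mulr_sumr; field.
Qed.

Lemma sum_cV_ge0_eq0 (R : numDomainType) n (z : 'cV[R]_n) :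
  (forall k, 0 <= z k 0) -> \sum_k z k 0 = 0 -> z = 0.
Proof.
move=> z_ge0 sz0; apply/matrixP => i j; rewrite (ord1 j) mxE.
exact: (psumr_eq0P _ sz0).
Qed.

Lemma sum_cV_eq0_signs (R : realDomainType) n (z : 'cV[R]_n) :
  \sum_k z k 0 = 0 ->
  z = 0 \/ ((exists k, 0 < z k 0) /\ (exists k, z k 0 < 0)).
Proof.
move=> sz0.
case: (pickP (fun k => 0 < z k 0)) => [k1 pos1|no_pos]; last first.
  left; apply: oppr_inj; rewrite oppr0; apply: sum_cV_ge0_eq0 => [k|].
    by rewrite mxE oppr_ge0 leNgt no_pos.
  by under eq_bigr => k _ do rewrite mxE; rewrite sumrN sz0 oppr0.
case: (pickP (fun k => z k 0 < 0)) => [k2 neg2|no_neg].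
  by right; split; [exists k1|exists k2].
by left; apply: sum_cV_ge0_eq0 => // k; rewrite leNgt no_neg.
Qed.

Section Model.
Variables (R : rcfType) (n : nat) (sigma : R) (c gamma nu rho : 'I_n -> R).
Hypotheses (n_gt0 : (0 < n)%N) (sigma_gt0 : 0 < sigma)
  (c_gt0 : forall i, 0 < c i) (gamma_gt0 : forall i, 0 < gamma i)
  (nu_gt0 : forall i, 0 < nu i) (rho_itv : forall i, -1 < rho i < 1).

Local Notation p := (pp c gamma nu).
Local Notation zeta := (zeta c gamma nu).
Local Notation Theta := (Theta c gamma nu).
Local Notation varphi := (varphi c gamma nu rho).
Local Notation L := (Lmx c gamma nu rho).

Lemma natn_gt0 : 0 < n%:R :> R.
Proof. by rewrite ltr0n. Qed.

Lemma natn_neq0 : n%:R != 0 :> R.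
Proof. by rewrite gt_eqF // natn_gt0. Qed.

Lemma pp_gt0 i j : 0 < p i j.
Proof.
have gnu_gt0 k l : 0 < gamma k * nu l ^+ 2 by rewrite mulr_gt0 ?exprn_gt0.
by rewrite /pp; case: (i == j); rewrite divr_gt0 ?ltr01 ?addr_gt0 ?gnu_gt0 ?divr_gt0 ?ltr01.
Qed.

Lemma gamma_nu_pp k j : gamma k * nu j ^+ 2 * p k j = if k == j then 1 - zeta k else 1.
Proof.
rewrite /zeta /pp; case: eqP => [<-|_] /=; rewrite ?eqxx.
  have ck_neq0 : c k != 0 by rewrite gt_eqF.
  have den_neq0 : gamma k * nu k ^+ 2 * c k + 1 != 0.
    by rewrite gt_eqF // addr_gt0 // !mulr_gt0 // exprn_gt0.
  by field; rewrite ck_neq0 den_neq0.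
have gk_neq0 : gamma k != 0 by rewrite gt_eqF.
have nuj_neq0 : nu j != 0 by rewrite gt_eqF.
by field; rewrite gk_neq0 nuj_neq0.
Qed.

Lemma zeta_gt0 j : 0 < zeta j.
Proof. by rewrite divr_gt0 ?pp_gt0. Qed.

Lemma zeta_lt1 j : zeta j < 1.
Proof.
have : 0 < gamma j * nu j ^+ 2 * p j j by rewrite !mulr_gt0 ?exprn_gt0 ?pp_gt0.
by rewrite gamma_nu_pp eqxx subr_gt0.
Qed.

Lemma Theta_gt0 j : 0 < Theta j.
Proof.
rewrite /Theta (bigD1 j) //= ltr_pwDl ?pp_gt0 //.
by apply: sumr_ge0 => i _; exact: ltW (pp_gt0 i j).
Qed.

Definition varphi_defect : R := 1 - (\sum_i rho i ^+ 2) / n%:R.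

Lemma varphi_defect_gt0 : 0 < varphi_defect.
Proof.
rewrite subr_gt0 ltr_pdivrMr ?natn_gt0 // mul1r.
rewrite -[n in n%:R]card_ord -sumr_const.
apply: ltr_sum => [|i _]; first by apply/hasP; exists (Ordinal n_gt0).
rewrite -subr_gt0 (_ : 1 - rho i ^+ 2 = (1 - rho i) * (1 + rho i)); last by ring.
by have := rho_itv i; case/andP => ? ?; apply: mulr_gt0; lra.
Qed.

Lemma varphiE k : varphi k = varphi_defect + rho k ^+ 2 * zeta k / n%:R.
Proof.
rewrite /varphi /upsilon /varphi_defect.
have -> : gamma k / n%:R * \sum_j rho j ^+ 2 * nu j ^+ 2 * p k j
   = (\sum_j rho j ^+ 2 * (if k == j then 1 - zeta k else 1)) / n%:R.
  rewrite mulr_sumr mulr_suml; apply: eq_bigr => j _; rewrite -gamma_nu_pp.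
  by field; rewrite natn_neq0.
rewrite (bigD1 k) //= eqxx [X in _ = 1 - X / _ + _](bigD1 k) //=.
under eq_bigr => i /negPf ki do rewrite eq_sym ki mulr1.
by field; rewrite natn_neq0.
Qed.

Lemma varphi_gt0 k : 0 < varphi k.
Proof.
rewrite varphiE ltr_pwDl ?varphi_defect_gt0 //.
by rewrite divr_ge0 ?ler0n // mulr_ge0 ?sqr_ge0 // ltW ?zeta_gt0.
Qed.

Lemma Lmx_ge0 i j : 0 <= L i j.
Proof.
rewrite mxE divr_ge0 //.
  exact: mulr_ge0 (mulr_ge0 (sqr_ge0 _) (ltW (zeta_gt0 _))) (ltW (pp_gt0 _ _)).
exact: mulr_ge0 (mulr_ge0 (ler0n _ _) (ltW (varphi_gt0 _))) (ltW (Theta_gt0 _)).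
Qed.

Lemma varphi_Lmx_colsum j : \sum_k varphi k * L k j = varphi j - varphi_defect.
Proof.
have Tj_neq0 : Theta j != 0 by rewrite gt_eqF ?Theta_gt0.
have -> : \sum_k varphi k * L k j
         = \sum_k rho j ^+ 2 * zeta j / (n%:R * Theta j) * p k j.
  apply: eq_bigr => k _; rewrite mxE.
  have phk_neq0 : varphi k != 0 by rewrite gt_eqF ?varphi_gt0.
  by field; rewrite phk_neq0 Tj_neq0 natn_neq0.
by rewrite -mulr_sumr -/(Theta j) varphiE; field; rewrite Tj_neq0 natn_neq0.
Qed.

Lemma Vvec_gt0 k : 0 < Vvec sigma c gamma nu rho k 0.
Proof.
by rewrite mxE divr_gt0 ?natn_gt0 // mulr_gt0 ?varphi_gt0 // mulr_gt0 ?exprn_gt0.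
Qed.

Lemma uvec_gt0 k : 0 < uvec sigma c gamma nu rho k 0.
Proof.
apply: (invmx_1subL_gt0 Lmx_ge0 varphi_gt0 varphi_defect_gt0 varphi_Lmx_colsum).
exact: Vvec_gt0.
Qed.

Variable s : R.
Hypotheses (s_sign : s = 1 \/ s = -1) (s_rho_ge0 : forall i, 0 <= s * rho i)
  (rho_neq0 : exists i, rho i != 0).

Lemma s_rho_gt0 i : rho i != 0 -> 0 < s * rho i.
Proof.
move=> rhoi_neq0; rewrite lt_def s_rho_ge0 andbT mulf_neq0 //.
by case: s_sign => ->; rewrite ?oppr_eq0 oner_eq0.
Qed.

Lemma sUvec_lt0 k : s * Uvec sigma c gamma nu rho k 0 < 0.
Proof.
rewrite mxE -oppr_gt0.
set A := 1 / (sigma * Num.sqrt n%:R).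
set S := \sum_j _.
set T := rho k * nu k / c k * p k k.
have -> : - (s * (- (1 / varphi k) * (A * S + A * T)))
          = (1 / varphi k) * A * (s * S + s * T) by ring.
have A_gt0 : 0 < A by rewrite divr_gt0 // mulr_gt0 // sqrtr_gt0 natn_gt0.
apply: mulr_gt0; first by rewrite mulr_gt0 // divr_gt0 // varphi_gt0.
have sT_ge0 : 0 <= s * T.
  rewrite (_ : s * T = (s * rho k) * (nu k / c k * p k k)); last by rewrite /T; ring.
  apply: mulr_ge0 (s_rho_ge0 k) (mulr_ge0 _ (ltW (pp_gt0 k k))).
  exact: divr_ge0 (ltW (nu_gt0 k)) (ltW (c_gt0 k)).
rewrite ltr_wpDr // /S mulr_sumr.
have termE j : s * ((1 - zeta j) / Theta j * MM c gamma nu rho k j)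
             = (1 - zeta j) / Theta j * nu j * p k j * (s * rho j).
  by rewrite /MM; ring.
have coef_gt0 j : 0 < (1 - zeta j) / Theta j * nu j * p k j.
  apply: mulr_gt0 _ (pp_gt0 k j); apply: mulr_gt0 _ (nu_gt0 j).
  by rewrite divr_gt0 ?Theta_gt0 // subr_gt0 zeta_lt1.
case: rho_neq0 => i rhoi_neq0.
rewrite (bigD1 i) //= termE.
apply: ltr_pwDl; first exact: mulr_gt0 (coef_gt0 i) (s_rho_gt0 rhoi_neq0).
apply: sumr_ge0 => j _; rewrite termE.
exact: mulr_ge0 (ltW (coef_gt0 j)) (s_rho_ge0 j).
Qed.

Lemma svvec_lt0 k : s * vvec sigma c gamma nu rho k 0 < 0.
Proof.
have := invmx_1subL_gt0 Lmx_ge0 varphi_gt0 varphi_defect_gt0 varphi_Lmx_colsum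
  (b := - (s *: Uvec sigma c gamma nu rho)).
move=> /(_ _ k); rewrite mulmxN -scalemxAr !mxE oppr_gt0; apply=> i.
by rewrite 2!mxE oppr_gt0 sUvec_lt0.
Qed.

Lemma sum_zbar : \sum_k zbar sigma c gamma nu rho k 0 = 0.
Proof. by rewrite sum_cV_balanced // gt_eqF // sum_cV_gt0 // => k; exact: uvec_gt0. Qed.

End Model.

Theorem mainTheorem9 (R : rcfType) (n : nat) (sigma : R)
  (c gamma nu rho : 'I_n -> R) (s : R) :
  (0 < n)%N ->
  0 < sigma ->
  (forall i, 0 < c i) -> (forall i, 0 < gamma i) -> (forall i, 0 < nu i) ->
  (forall i, -1 < rho i < 1) ->
  (s = 1 \/ s = -1) ->
  (forall i, 0 <= s * rho i) ->
  (exists i, rho i != 0) ->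
  (forall k, 0 < uvec sigma c gamma nu rho k 0) /\
  (forall k, s * vvec sigma c gamma nu rho k 0 < 0) /\
  (zbar sigma c gamma nu rho = 0 \/
   ((exists k, 0 < zbar sigma c gamma nu rho k 0) /\
    (exists k, zbar sigma c gamma nu rho k 0 < 0))).
Proof.
move=> n_gt0 sigma_gt0 c_gt0 gamma_gt0 nu_gt0 rho_itv s_sign s_rho_ge0 rho_neq0.
split; first exact: uvec_gt0.
split; first exact: svvec_lt0.
by apply: sum_cV_eq0_signs; exact: sum_zbar.
Qed.
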